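(* Let $X$ be a non-empty set, let $a\notin X$, and let $G$ be the free group on $X\cup\{a\}$. For each $y\in X$ let $\psi_y$ be the endomorphism of $G$ with $\psi_y(y)=a$, $\psi_y(a)=1$ and $\psi_y(x)=1$ for $x\in X\setminus\{y\}$, and define $g\circ_y h=g\cdot\psi_y(g)\cdot h\cdot\psi_y(g)^{-1}$. Then $(\circ_y:y\in X)$ is a brace block on $G$ and the operations $\circ_y$, $y\in X$, are pairwise distinct: $x\circ_y x=x\cdot x$ for $x\in X\setminus\{y\}$, while $y\circ_y y=y\cdot a\cdot y\cdot a^{-1}\ne y\cdot y$.
   Context: A skew brace is a triple $(G,\cdot,\circ)$ where $(G,\cdot)$ and $(G,\circ)$ are groups and $g\circ(h\cdot k)=(g\circ h)\cdot g^{-1}\cdot(g\circ k)$ for all $g,h,k$. A bi-skew brace is a triple $(G,\cdot,\circ)$ such that both $(G,\cdot,\circ)$ and $(G,\circ,\cdot)$ are skew braces. A brace block on a set $G$ is a family of group operations on $G$ any two of which form a bi-skew brace. *)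

From Stdlib Require Import Utf8.

Definition group_laws {T : Type} (mul : T -> T -> T) (e : T) (inv : T -> T) : Prop :=
  (forall x y z, mul x (mul y z) = mul (mul x y) z) /\
  (forall x, mul e x = x /\ mul x e = x) /\
  (forall x, mul (inv x) x = e /\ mul x (inv x) = e).

Definition is_group_op {T : Type} (op : T -> T -> T) : Prop :=
  exists e inv, group_laws op e inv.

Definition skew_brace {T : Type} (dot circ : T -> T -> T) : Prop :=
  is_group_op circ /\
  exists e inv, group_laws dot e inv /\
    forall g h k, circ g (dot h k) = dot (dot (circ g h) (inv g)) (circ g k).

Definition bi_skew_brace {T : Type} (dot circ : T -> T -> T) : Prop :=
  skew_brace dot circ /\ skew_brace circ dot.

Definition brace_block {T I : Type} (ops : I -> T -> T -> T) : Prop :=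
  (forall i, is_group_op (ops i)) /\
  (forall i j, bi_skew_brace (ops i) (ops j)).

Definition is_hom {G H : Type} (mulG : G -> G -> G) (mulH : H -> H -> H)
  (phi : G -> H) : Prop :=
  forall g h, phi (mulG g h) = mulH (phi g) (phi h).

Definition is_free_on {G S : Type} (mul : G -> G -> G) (e : G) (inv : G -> G)
  (gen : S -> G) : Prop :=
  forall (H : Type) (mulH : H -> H -> H) (eH : H) (invH : H -> H),
    group_laws mulH eH invH ->
    forall f : S -> H,
      (exists phi : G -> H, is_hom mul mulH phi /\ forall s, phi (gen s) = f s) /\
      (forall phi1 phi2 : G -> H,
          is_hom mul mulH phi1 -> (forall s, phi1 (gen s) = f s) ->
          is_hom mul mulH phi2 -> (forall s, phi2 (gen s) = f s) ->
          forall g, phi1 g = phi2 g).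

(* For an endomorphism f of a group, g ∘_f h := g f(g) h f(g)^-1 is a group law as soon as
   f ∘ f is trivial, and two such laws ∘_f, ∘_c form a bi-skew brace as soon as all
   composites of f and c are trivial and the images of f and c commute elementwise.
   On the free group on X ∪ {a}, every ψ_y maps generators into {a, 1} and kills a, so the
   composites ψ_z ∘ ψ_y are trivial.  For c centralising a, ψ_y followed by conjugation by c
   agrees with ψ_y on generators, so the images of ψ_y commute with c, in particular with a
   and hence with one another; this gives the brace block.  The laws are distinct because
   y ∘_y y = y·y would force a and y to commute, which fails in the infinite dihedral
   quotient of the free group. *)
From Stdlib Require Import ZArith Lia Classical ClassicalEpsilon.

Definition commute {T : Type} (mul : T -> T -> T) (x y : T) : Prop := mul x y = mul y x.

Section GroupLemmas.
Context {T : Type} {mul : T -> T -> T} {e : T} {inv : T -> T}.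
Hypothesis Hg : group_laws mul e inv.

Lemma mulgA x y z : mul (mul x y) z = mul x (mul y z).
Proof. symmetry; apply (proj1 Hg). Qed.

Lemma mul1g x : mul e x = x.
Proof. apply (proj2 Hg). Qed.

Lemma mulg1 x : mul x e = x.
Proof. apply (proj2 Hg). Qed.

Lemma mulVg x : mul (inv x) x = e.
Proof. apply (proj2 (proj2 Hg)). Qed.

Lemma mulgV x : mul x (inv x) = e.
Proof. apply (proj2 (proj2 Hg)). Qed.

Lemma mulKg x y : mul (inv x) (mul x y) = y.
Proof. now rewrite <- mulgA, mulVg, mul1g. Qed.

Lemma mulKVg x y : mul x (mul (inv x) y) = y.
Proof. now rewrite <- mulgA, mulgV, mul1g. Qed.

Lemma mulgI x y z : mul x y = mul x z -> y = z.
Proof. intro E. now rewrite <- (mulKg x y), E, mulKg. Qed.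

Lemma inv_of_mul_eq1 x y : mul x y = e -> inv x = y.
Proof. intro E. apply (mulgI x). now rewrite E, mulgV. Qed.

Lemma invgK x : inv (inv x) = x.
Proof. apply inv_of_mul_eq1, mulVg. Qed.

Lemma invg1 : inv e = e.
Proof. apply inv_of_mul_eq1, mul1g. Qed.

Lemma invMg x y : inv (mul x y) = mul (inv y) (inv x).
Proof. apply inv_of_mul_eq1. now rewrite mulgA, mulKVg, mulgV. Qed.

Lemma hom1 f : is_hom mul mul f -> f e = e.
Proof. intro Hf. apply (mulgI (f e)). now rewrite <- Hf, !mulg1. Qed.

Lemma homV f : is_hom mul mul f -> forall x, f (inv x) = inv (f x).
Proof. intros Hf x. symmetry. apply inv_of_mul_eq1. now rewrite <- Hf, mulgV, hom1. Qed.

Lemma commute_mulCA x y z : commute mul x y -> mul x (mul y z) = mul y (mul x z).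
Proof. intro E. now rewrite <- !mulgA, E. Qed.

Lemma commuteV x y : commute mul x y -> commute mul x (inv y).
Proof.
  intro E. apply (mulgI y). unfold commute.
  now rewrite <- mulgA, <- E, mulgA, mulgV, mulg1, mulKVg.
Qed.

Lemma commuteVV x y : commute mul x y -> commute mul (inv x) (inv y).
Proof. intro E. unfold commute. now rewrite <- !invMg, E. Qed.

Lemma conj_eq_commute x y a : mul (mul (mul x a) y) (inv a) = mul x y -> commute mul a y.
Proof.
  intro E. rewrite !mulgA in E. apply mulgI in E.
  unfold commute. rewrite <- E at 2. now rewrite !mulgA, mulVg, mulg1.
Qed.

End GroupLemmas.

Ltac group_simpl Hg :=
  repeat rewrite ?(mulgA Hg), ?(mul1g Hg), ?(mulg1 Hg), ?(mulVg Hg), ?(mulgV Hg),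
    ?(mulKg Hg), ?(mulKVg Hg), ?(invgK Hg), ?(invg1 Hg), ?(invMg Hg).

Section TwistedOperation.
Context {T : Type} {mul : T -> T -> T} {e : T} {inv : T -> T}.
Hypothesis Hg : group_laws mul e inv.

Definition twisted_op (f : T -> T) (g h : T) : T := mul (mul (mul g (f g)) h) (inv (f g)).

Definition twisted_inv (f : T -> T) (g : T) : T := mul (mul (inv (f g)) (inv g)) (f g).

Lemma hom_twisted_op f c :
  is_hom mul mul f -> (forall g, f (c g) = e) ->
  forall g h, f (twisted_op c g h) = mul (f g) (f h).
Proof. intros Hf Hfc g h. unfold twisted_op. rewrite !Hf, (homV Hg f Hf), Hfc. now group_simpl Hg. Qed.

Lemma twisted_op_group f :
  is_hom mul mul f -> (forall g, f (f g) = e) ->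
  group_laws (twisted_op f) e (twisted_inv f).
Proof.
  intros Hf Hff. split; [|split].
  - intros x y z. unfold twisted_op at 3. rewrite (hom_twisted_op f f Hf Hff).
    unfold twisted_op. now group_simpl Hg.
  - intro x. unfold twisted_op. rewrite (hom1 Hg f Hf). now group_simpl Hg.
  - intro x. unfold twisted_op, twisted_inv. rewrite !Hf, !(homV Hg f Hf), Hff. now group_simpl Hg.
Qed.

Lemma twisted_op_brace f c :
  is_hom mul mul f ->
  (forall g, f (f g) = e) -> (forall g, f (c g) = e) ->
  (forall g h, commute mul (f g) (f h)) -> (forall g h, commute mul (f g) (c h)) ->
  forall g h k,
    twisted_op c g (twisted_op f h k)
    = twisted_op f (twisted_op f (twisted_op c g h) (twisted_inv f g)) (twisted_op c g k).
Proof.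
  intros Hf Hff Hfc Cff Cfc g h k.
  unfold twisted_op, twisted_inv.
  repeat progress rewrite ?Hf, ?(homV Hg f Hf), ?Hff, ?Hfc, ?(hom1 Hg f Hf).
  group_simpl Hg.
  rewrite (commute_mulCA Hg (f g) (f h)) by apply Cff. rewrite (mulKVg Hg).
  rewrite (commute_mulCA Hg (f h) (c g)) by apply Cfc. rewrite (mulKg Hg).
  rewrite (commute_mulCA Hg (f g) (inv (f h))) by apply (commuteV Hg), Cff.
  rewrite (mulgV Hg), (mulg1 Hg).
  rewrite (commuteVV Hg (f h) (c g)) by apply Cfc. reflexivity.
Qed.

Lemma twisted_op_skew_brace f c :
  is_hom mul mul f -> is_hom mul mul c ->
  (forall g, f (f g) = e) -> (forall g, c (c g) = e) -> (forall g, f (c g) = e) ->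
  (forall g h, commute mul (f g) (f h)) -> (forall g h, commute mul (f g) (c h)) ->
  skew_brace (twisted_op f) (twisted_op c).
Proof.
  intros Hf Hc Hff Hcc Hfc Cff Cfc. split.
  - exists e, (twisted_inv c). exact (twisted_op_group c Hc Hcc).
  - exists e, (twisted_inv f). split.
    + exact (twisted_op_group f Hf Hff).
    + exact (twisted_op_brace f c Hf Hff Hfc Cff Cfc).
Qed.

Lemma twisted_op_brace_block {I : Type} (phi : I -> T -> T) :
  (forall i, is_hom mul mul (phi i)) ->
  (forall i j g, phi i (phi j g) = e) ->
  (forall i j g h, commute mul (phi i g) (phi j h)) ->
  brace_block (fun i => twisted_op (phi i)).
Proof.
  intros Hphi Hnil Hcomm. split.
  - intro i. exists e, (twisted_inv (phi i)). exact (twisted_op_group _ (Hphi i) (Hnil i i)).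
  - intros i j. split; apply twisted_op_skew_brace; auto.
Qed.

End TwistedOperation.

(* The infinite dihedral group: (s, n) is the map x ↦ (-1)^s x + n of Z, and
   [dih_mul p q] is "first p, then q". *)
Definition dih_mul (p q : bool * Z) : bool * Z :=
  (xorb (fst p) (fst q), ((if fst q then -1 else 1) * snd p + snd q)%Z).

Definition dih_inv (p : bool * Z) : bool * Z :=
  (fst p, (- (if fst p then -1 else 1) * snd p)%Z).

Lemma dih_group_laws : group_laws dih_mul (false, 0%Z) dih_inv.
Proof.
  unfold dih_mul, dih_inv. split; [|split].
  - intros [s n] [t m] [u k]; cbn [fst snd]. f_equal.
    + now destruct s, t, u.
    + destruct t, u; cbn [fst snd xorb]; lia.
  - intros [s n]; cbn [fst snd]. split; f_equal; try (destruct s; reflexivity); lia.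
  - intros [s n]; cbn [fst snd]. split; f_equal; destruct s; cbn [xorb]; try reflexivity; lia.
Qed.

Section FreeGroup.
Context {S G : Type} {mul : G -> G -> G} {e : G} {inv : G -> G} {gen : S -> G}.
Hypothesis Hg : group_laws mul e inv.
Hypothesis Hfree : is_free_on mul e inv gen.

Lemma free_endo_ext phi1 phi2 :
  is_hom mul mul phi1 -> is_hom mul mul phi2 ->
  (forall s, phi1 (gen s) = phi2 (gen s)) -> forall g, phi1 g = phi2 g.
Proof.
  intros H1 H2 Hs.
  exact (proj2 (Hfree G mul e inv Hg (fun s => phi2 (gen s))) phi1 phi2 H1 Hs H2 (fun _ => eq_refl)).
Qed.

Lemma free_gens_noncommute s t : s <> t -> ~ commute mul (gen s) (gen t).
Proof.
  intros Hst E.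
  set (img := fun u => if excluded_middle_informative (u = s) then (true, 0%Z) else (false, 1%Z)).
  destruct (proj1 (Hfree _ dih_mul _ _ dih_group_laws img)) as [phi [Hphi Hgen]].
  apply (f_equal phi) in E. rewrite !Hphi, !Hgen in E. unfold img in E.
  destruct (excluded_middle_informative (s = s)) as [_|]; [|contradiction].
  destruct (excluded_middle_informative (t = s)) as [|_]; [congruence|].
  discriminate E.
Qed.

Context {I : Type} (a : G) (psi : I -> G -> G).
Hypothesis Hpsi_hom : forall i, is_hom mul mul (psi i).
Hypothesis Hpsi_gen : forall i s, psi i (gen s) = a \/ psi i (gen s) = e.
Hypothesis Hpsi_a : forall i, psi i a = e.

Lemma psi_psi i j g : psi i (psi j g) = e.
Proof.
  revert g. apply (free_endo_ext (fun g => psi i (psi j g)) (fun _ => e)).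
  - intros g h. now rewrite !Hpsi_hom.
  - intros g h. now rewrite (mul1g Hg).
  - intro s. destruct (Hpsi_gen j s) as [-> | ->]; [apply Hpsi_a | apply (hom1 Hg), Hpsi_hom].
Qed.

Lemma psi_commute_centraliser c : commute mul c a -> forall i g, commute mul (psi i g) c.
Proof.
  intros Hca i g.
  assert (Hconj : psi i g = mul (mul c (psi i g)) (inv c)).
  { revert g. apply (free_endo_ext (psi i) (fun g => mul (mul c (psi i g)) (inv c))).
    - apply Hpsi_hom.
    - intros g h. rewrite Hpsi_hom. now group_simpl Hg.
    - intro s. destruct (Hpsi_gen i s) as [-> | ->].
      + rewrite Hca. now group_simpl Hg.
      + now group_simpl Hg. }
  unfold commute. rewrite Hconj at 1. now group_simpl Hg.
Qed.

Lemma psi_commute i j g h : commute mul (psi i g) (psi j h).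
Proof.
  symmetry. apply psi_commute_centraliser.
  apply psi_commute_centraliser. reflexivity.
Qed.

End FreeGroup.

Theorem mainTheorem13
  (X : Type) (HX : inhabited X)
  (G : Type) (mul : G -> G -> G) (e : G) (inv : G -> G)
  (Hgrp : group_laws mul e inv)
  (gen : option X -> G)
  (Hfree : is_free_on mul e inv gen)
  (psi : X -> G -> G)
  (Hpsi_hom : forall y, is_hom mul mul (psi y))
  (Hpsi_y : forall y, psi y (gen (Some y)) = gen None)
  (Hpsi_a : forall y, psi y (gen None) = e)
  (Hpsi_x : forall y x, x <> y -> psi y (gen (Some x)) = e) :
  let circ := fun (y : X) (g h : G) =>
                mul (mul (mul g (psi y g)) h) (inv (psi y g)) in
  brace_block circ /\
  (forall y z : X, y <> z -> circ y <> circ z) /\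
  (forall y x : X, x <> y ->
     circ y (gen (Some x)) (gen (Some x)) = mul (gen (Some x)) (gen (Some x))) /\
  (forall y : X,
     circ y (gen (Some y)) (gen (Some y))
       = mul (mul (mul (gen (Some y)) (gen None)) (gen (Some y))) (inv (gen None)) /\
     circ y (gen (Some y)) (gen (Some y)) <> mul (gen (Some y)) (gen (Some y))).
Proof.
  intro circ.
  assert (Hpsi_gen : forall y s, psi y (gen s) = gen None \/ psi y (gen s) = e).
  { intros y [x|]; [|now right].
    destruct (classic (x = y)) as [->|Hxy]; [now left | right; now apply Hpsi_x]. }
  assert (circ_other : forall y x, x <> y ->
            circ y (gen (Some x)) (gen (Some x)) = mul (gen (Some x)) (gen (Some x))).
  { intros y x Hxy. unfold circ. rewrite Hpsi_x by exact Hxy. now group_simpl Hgrp. }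
  assert (circ_self : forall y, circ y (gen (Some y)) (gen (Some y))
            = mul (mul (mul (gen (Some y)) (gen None)) (gen (Some y))) (inv (gen None))).
  { intro y. unfold circ. now rewrite Hpsi_y. }
  assert (circ_self_ne : forall y,
            circ y (gen (Some y)) (gen (Some y)) <> mul (gen (Some y)) (gen (Some y))).
  { intros y E. rewrite circ_self in E.
    apply (free_gens_noncommute Hfree None (Some y)); [discriminate|].
    exact (conj_eq_commute Hgrp _ _ _ E). }
  split; [|split; [|split]].
  - apply (twisted_op_brace_block Hgrp psi Hpsi_hom).
    + exact (psi_psi Hgrp Hfree (gen None) psi Hpsi_hom Hpsi_gen Hpsi_a).
    + exact (psi_commute Hgrp Hfree (gen None) psi Hpsi_hom Hpsi_gen).
  - intros y z Hyz E. apply (circ_self_ne y). rewrite E. apply circ_other. auto.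
  - exact circ_other.
  - intro y. split; [apply circ_self | apply circ_self_ne].
Qed.
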